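(* Let $M_t$ be the spherical mean curvature flow of isoparametric hypersurfaces in $S^{n+1}$ with $g$ distinct principal curvatures, with $M_0$ not minimal, and let $A(t),H(t)$ be its shape operator and scalar mean curvature. (1) If $g=1$, then $\|A(t)\|^2/H^2(t)\equiv 1/n$. (2) If $g\ge 2$, there exist $t_1>0$ and positive constants $c_1,c_2$ such that $$c_2e^{-2gnt}\le\frac{\|A(t)\|^2}{H^2(t)}\le c_1e^{-2gnt}\quad\text{for all } t<-t_1.$$
   Context: Let $M^n$ be a compact isoparametric hypersurface in the unit sphere $S^{n+1}\subset\mathbb{R}^{n+2}$ (constant principal curvatures) with $g$ distinct principal curvatures; then $g\in\{1,2,3,4,6\}$. Fix $x_0\in M$ and identify the 2-dimensional normal space $\nu_{x_0}M$ of $M$ in $\mathbb{R}^{n+2}$ with $\mathbb{C}$ so that the two focal submanifolds $M_+$, $M_-$ ($\dim M_+\le\dim M_-$) meet the normal circle at $1$ and $e^{i\pi/g}$ (the intersection points closest to $x_0$). The Weyl chamber is $C=\{re^{i\theta}:r>0,\ 0<\theta<\pi/g\}$. For $k=1,\dots,g$ let $\theta_k=k\pi/g-\pi/2$, $\alpha_k=e^{i\theta_k}$, and $m_k=m_1$ for $k$ odd, $m_k=m_2$ for $k$ even, where $(m_1,m_2)$, $m_1\le m_2$, is the multiplicity data of the principal curvatures; $m_1=m_2$ if $g$ is odd, and $(m_1+m_2)g=2n$. For $x\in C$, $M_x=\{p+\tilde\xi(p):p\in M\}$ where $\tilde\xi$ is the parallel normal field on $M$ with $\tilde\xi(x_0)=x-x_0$;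 it is an $n$-dimensional isoparametric submanifold of $\mathbb{R}^{n+2}$ lying in $S^{n+1}(|x|)$, with normal space $\nu_{x_0}M$ at $x$, and $T_xM_x=\oplus_kE_k$, $\dim E_k=m_k$, with Euclidean shape operator $A_\xi|_{E_k}=\langle\xi,-\alpha_k/\langle x,\alpha_k\rangle\rangle\mathrm{Id}$ ($\langle\cdot,\cdot\rangle$ the real inner product on $\mathbb{C}=\mathbb{R}^2$). $H^E(x),A^E(x)$ denote mean curvature vector and shape operator of $M_x$ at $x$ in $\mathbb{R}^{n+2}$; $H^S(x),A^S(x)$ those of $M_x$ as a hypersurface of $S^{n+1}(|x|)$; $\|A\|^2$ is the sum of squared Hilbert–Schmidt norms over an orthonormal normal basis. Set $\delta=(m_2-m_1)/(m_2+m_1)$ if $g\ge2$ and $\delta=0$ if $g=1$, and let $\theta_{\min}\in(0,\pi/g)$ be defined by $\cos g\theta_{\min}=-\delta$. The spherical MCF of $M_{y(0)}$ is the family $M_t=M_{y(t)}$ with $y(t)\in C$ unit and $y'(t)=H^S(y(t))$; it exists for all $t\le 0$; $A(t)=A^S(y(t))$ and $H^2(t)=\|H^S(y(t))\|^2$. *)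

From Stdlib Require Import Reals Lra Lia List.
Open Scope R_scope.

(* The normal plane nu_{x0} M is identified with C = R^2, points as pairs. *)
Definition vec := (R * R)%type.

Definition inner (a b : vec) : R := fst a * fst b + snd a * snd b.
Definition vnorm (a : vec) : R := sqrt (inner a a).

Definition sumk (g : nat) (f : nat -> R) : R :=
  fold_right (fun k acc => f k + acc) 0 (seq 1 g).

Definition theta (g k : nat) : R := INR k * PI / INR g - PI / 2.
Definition alpha (g k : nat) : vec := (cos (theta g k), sin (theta g k)).

Definition mult (m1 m2 k : nat) : R := if Nat.odd k then INR m1 else INR m2.

Definition inChamber (g : nat) (x : vec) : Prop :=
  exists r th, 0 < r /\ 0 < th < PI / INR g /\ x = (r * cos th, r * sin th).

(* Euclidean principal curvature of M_x at x on E_k in normal direction xi: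
   A_xi|E_k = < xi, - alpha_k / <x, alpha_k> > Id *)
Definition kappaE (g k : nat) (xi x : vec) : R :=
  - inner xi (alpha g k) / inner x (alpha g k).

(* Euclidean mean curvature vector H^E(x) = sum_k m_k (- alpha_k / <x,alpha_k>)
   (trace of the second fundamental form, i.e. <H^E, xi> = tr A_xi). *)
Definition HE (g m1 m2 : nat) (x : vec) : vec :=
  (sumk g (fun k => mult m1 m2 k * (- fst (alpha g k) / inner x (alpha g k))),
   sumk g (fun k => mult m1 m2 k * (- snd (alpha g k) / inner x (alpha g k)))).

(* Mean curvature vector of M_x as a hypersurface of S^{n+1}(|x|):
   the component of H^E tangent to the sphere (orthogonal to x). *)
Definition HS (g m1 m2 : nat) (x : vec) : vec :=
  let h := HE g m1 m2 x in
  let c := inner h x / inner x x in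
  (fst h - c * fst x, snd h - c * snd x).

(* unit normal of M_x in S^{n+1}(|x|) at x: unit vector of the normal plane
   orthogonal to x *)
Definition nuS (x : vec) : vec := (- snd x / vnorm x, fst x / vnorm x).

(* ||A^S(x)||^2 : squared Hilbert-Schmidt norm of the spherical shape
   operator A^S = A^E_{nuS x}, which is m_k kappa_k Id on E_k (dim m_k). *)
Definition normAS2 (g m1 m2 : nat) (x : vec) : R :=
  sumk g (fun k => mult m1 m2 k * (kappaE g k (nuS x) x) ^ 2).

Definition HS2 (g m1 m2 : nat) (x : vec) : R := inner (HS g m1 m2 x) (HS g m1 m2 x).

Definition isSphericalMCF (g m1 m2 : nat) (y : R -> vec) : Prop :=
  forall t, t <= 0 ->
    inChamber g (y t) /\ vnorm (y t) = 1 /\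
    derivable_pt_lim (fun s => fst (y s)) t (fst (HS g m1 m2 (y t))) /\
    derivable_pt_lim (fun s => snd (y s)) t (snd (HS g m1 m2 (y t))).

From Stdlib Require Import Reals Lra Lia List Nsatz.
Open Scope R_scope.

(* Along the flow the unit point y = e^{i th} of the chamber moves with angular
   velocity h, the scalar mean curvature of M_y in the sphere, and for the
   crystallographic values g in {1,2,3,4,6} the cotangent sum defining h collapses to
     2 h sin (g th) = - g ((m1 + m2) cos (g th) + m2 - m1).
   Hence u = (m1 + m2) (cos (g th) + delta) solves u' = g n u, so u(t) = u(0) e^{g n t},
   with u(0) <> 0 because M_0 is not minimal, and
     |A|^2 / H^2 = 4 |A|^2 sin^2 (g th) / (g u)^2.
   For g = 1 the numerator is a constant multiple of u^2.  For g >= 2 the factor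
   |A|^2 sin^2 (g th) lies between two positive constants as soon as e^{g n t} is
   small, because cos (g th) then stays away from -1 and 1. *)

Definition lsum (l : list nat) (f : nat -> R) : R :=
  fold_right (fun k acc => f k + acc) 0 l.

Lemma lsum_scal l c f : c * lsum l f = lsum l (fun k => c * f k).
Proof. induction l as [|k l IH]; simpl; [ring | rewrite <- IH; ring]. Qed.

Lemma lsum_plus l f h : lsum l f + lsum l h = lsum l (fun k => f k + h k).
Proof. induction l as [|k l IH]; simpl; [ring | rewrite <- IH; ring]. Qed.

Lemma lsum_ext l f h : (forall k, In k l -> f k = h k) -> lsum l f = lsum l h.
Proof. induction l as [|k l IH]; simpl; intros E; [reflexivity | rewrite E, IH; auto]. Qed.

Lemma sumk_lsum g f : sumk g f = lsum (seq 1 g) f.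
Proof. reflexivity. Qed.

Lemma lsum_le l f h : (forall k, In k l -> f k <= h k) -> lsum l f <= lsum l h.
Proof. induction l as [|k l IH]; simpl; intros H; [lra | apply Rplus_le_compat; auto]. Qed.

Lemma lsum_const l c : lsum l (fun _ => c) = INR (length l) * c.
Proof. induction l as [|k l IH]; rewrite ?length_cons, ?S_INR; simpl; [ring | rewrite IH; ring]. Qed.

Lemma lsum_nonneg l f : (forall k, In k l -> 0 <= f k) -> 0 <= lsum l f.
Proof. induction l as [|k l IH]; simpl; intros H; [lra | apply Rplus_le_le_0_compat; auto]. Qed.

Lemma lsum_app l1 l2 f : lsum (l1 ++ l2) f = lsum l1 f + lsum l2 f.
Proof. induction l1 as [|k l IH]; simpl; [ring | rewrite IH; ring]. Qed.

Lemma sumk_le_const g f c : (forall k, (1 <= k <= g)%nat -> f k <= c) -> sumk g f <= INR g * c.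
Proof.
  intros H. rewrite sumk_lsum.
  replace (INR g) with (INR (length (seq 1 g))) by now rewrite length_seq.
  rewrite <- lsum_const.
  apply lsum_le. intros k Hk. apply in_seq in Hk. apply H. lia.
Qed.

Lemma sumk_ge_last_two g f : (2 <= g)%nat -> (forall k, (1 <= k <= g)%nat -> 0 <= f k) ->
  f (g - 1)%nat + f g <= sumk g f.
Proof.
  intros Hg Hf. destruct g as [|[|g]]; [lia | lia |].
  rewrite sumk_lsum, !seq_S, !lsum_app. cbn [lsum fold_right Nat.add Nat.sub].
  assert (0 <= lsum (seq 1 g) f) by (apply lsum_nonneg; intros k Hk; apply in_seq in Hk; apply Hf; lia).
  lra.
Qed.

Definition cmul (a b : vec) : vec :=
  (fst a * fst b - snd a * snd b, fst a * snd b + snd a * fst b).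
Fixpoint zpow (x : vec) (k : nat) : vec :=
  match k with O => (1, 0) | S k => cmul (zpow x k) x end.

Lemma zpow_polar th k : zpow (cos th, sin th) k = (cos (INR k * th), sin (INR k * th)).
Proof.
  induction k as [|k IH].
  - cbn. rewrite Rmult_0_l, cos_0, sin_0. reflexivity.
  - cbn [zpow]. rewrite IH, S_INR, Rmult_plus_distr_r, Rmult_1_l, cos_plus, sin_plus.
    unfold cmul; cbn [fst snd]. f_equal; ring.
Qed.

Lemma vnorm_polar th : vnorm (cos th, sin th) = 1.
Proof.
  unfold vnorm, inner; cbn [fst snd].
  rewrite <- sqrt_1. f_equal. pose proof (sin2_cos2 th). unfold Rsqr in *. lra.
Qed.

Lemma unit_chamber_polar g x : inChamber g x -> vnorm x = 1 ->
  exists th, 0 < th < PI / INR g /\ x = (cos th, sin th).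
Proof.
  intros (r & th & Hr & Hth & ->) Hn. exists th; split; [exact Hth |].
  unfold vnorm, inner in Hn; cbn [fst snd] in Hn.
  replace (r * cos th * (r * cos th) + r * sin th * (r * sin th)) with (r * r) in Hn
    by (pose proof (sin2_cos2 th); unfold Rsqr in *; nsatz).
  rewrite sqrt_square in Hn by lra. subst r. f_equal; ring.
Qed.

Definition mul_i (x : vec) : vec := (- snd x, fst x).
Definition scalarHS (g m1 m2 : nat) (x : vec) : R := inner (HE g m1 m2 x) (mul_i x).

Lemma scalarHS_sum g m1 m2 x : scalarHS g m1 m2 x =
  sumk g (fun k => mult m1 m2 k * (snd x * fst (alpha g k) - fst x * snd (alpha g k))
                    / inner x (alpha g k)).
Proof.
  unfold scalarHS, HE, inner at 1, mul_i; cbn [fst snd]. rewrite !sumk_lsum.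
  rewrite Rmult_comm, lsum_scal, Rmult_comm, lsum_scal, lsum_plus.
  apply lsum_ext; intros; unfold Rdiv; ring.
Qed.

Definition crystallographic (g : nat) : Prop := (g = 1 \/ g = 2 \/ g = 3 \/ g = 4 \/ g = 6)%nat.

Lemma crystallographic_ge_1 g : crystallographic g -> (1 <= g)%nat.
Proof. intros [->|[->|[->|[->| ->]]]]; lia. Qed.

Lemma alpha_at g k b : theta g k = b -> alpha g k = (cos b, sin b).
Proof. unfold alpha; intros ->; reflexivity. Qed.

Ltac alpha_value b :=
  rewrite (alpha_at _ _ b) by (unfold theta; simpl INR; field);
  rewrite ?cos_neg, ?sin_neg, ?cos_0, ?sin_0, ?cos_PI2, ?sin_PI2, ?cos_PI3, ?sin_PI3,
    ?cos_PI4, ?sin_PI4, ?cos_PI6, ?sin_PI6;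
  f_equal; unfold Rdiv; ring.

Lemma alpha_values_1 : alpha 1 1 = (0, 1).
Proof. alpha_value (PI/2). Qed.

Lemma alpha_values_2 : alpha 2 1 = (1, 0) /\ alpha 2 2 = (0, 1).
Proof. split; [alpha_value 0 | alpha_value (PI/2)]. Qed.

Lemma alpha_values_3 :
  alpha 3 1 = (sqrt 3 * /2, - /2) /\ alpha 3 2 = (sqrt 3 * /2, /2) /\ alpha 3 3 = (0, 1).
Proof. repeat split; [alpha_value (-(PI/6)) | alpha_value (PI/6) | alpha_value (PI/2)]. Qed.

Lemma alpha_values_4 :
  alpha 4 1 = (/ sqrt 2, - / sqrt 2) /\ alpha 4 2 = (1, 0) /\
  alpha 4 3 = (/ sqrt 2, / sqrt 2) /\ alpha 4 4 = (0, 1).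
Proof.
  repeat split; [alpha_value (-(PI/4)) | alpha_value 0 | alpha_value (PI/4) | alpha_value (PI/2)].
Qed.

Lemma alpha_values_6 :
  alpha 6 1 = (/2, - (sqrt 3 * /2)) /\ alpha 6 2 = (sqrt 3 * /2, - /2) /\
  alpha 6 3 = (1, 0) /\ alpha 6 4 = (sqrt 3 * /2, /2) /\
  alpha 6 5 = (/2, sqrt 3 * /2) /\ alpha 6 6 = (0, 1).
Proof.
  repeat split; [alpha_value (-(PI/3)) | alpha_value (-(PI/6)) | alpha_value 0
               | alpha_value (PI/6) | alpha_value (PI/3) | alpha_value (PI/2)].
Qed.

Ltac rewrite_alpha_values :=
  repeat match goal with
  | |- context [alpha 1 _] => rewrite alpha_values_1
  | |- context [alpha 2 _] => destruct alpha_values_2 as [A1 A2]; rewrite ?A1, ?A2; clear A1 A2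
  | |- context [alpha 3 _] =>
      destruct alpha_values_3 as (A1 & A2 & A3); rewrite ?A1, ?A2, ?A3; clear A1 A2 A3
  | |- context [alpha 4 _] =>
      destruct alpha_values_4 as (A1 & A2 & A3 & A4); rewrite ?A1, ?A2, ?A3, ?A4; clear A1 A2 A3 A4
  | |- context [alpha 6 _] =>
      destruct alpha_values_6 as (A1 & A2 & A3 & A4 & A5 & A6);
      rewrite ?A1, ?A2, ?A3, ?A4, ?A5, ?A6; clear A1 A2 A3 A4 A5 A6
  end.

Definition lprod (l : list nat) (f : nat -> R) : R :=
  fold_right (fun k acc => f k * acc) 1 l.

Lemma sqrt2_inv_sq : 2 * (/ sqrt 2 * / sqrt 2) = 1.
Proof. rewrite <- Rinv_mult, sqrt_sqrt by lra. field. Qed.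

Lemma sqrt3_sq : sqrt 3 * sqrt 3 = 3.
Proof. apply sqrt_sqrt; lra. Qed.

(* The polynomial form of sin (g th) = 2^(g-1) prod_k sin (k PI / g - th). *)
Lemma im_zpow_product g x1 x2 : crystallographic g ->
  snd (zpow (x1, x2) g) = 2 ^ (g - 1) * lprod (seq 1 g) (fun k => inner (x1, x2) (alpha g k)).
Proof.
  intros Hg. pose proof sqrt2_inv_sq. pose proof sqrt3_sq. assert (2 * /2 = 1) by field.
  destruct Hg as [->|[->|[->|[->| ->]]]];
    cbn [seq lprod fold_right Nat.sub]; rewrite_alpha_values;
    unfold inner; cbn [zpow cmul fst snd pow];
    set (s := sqrt 3) in *; set (r := / sqrt 2) in *; set (h := /2) in *;
    clearbody s r h; nsatz.
Qed.

Lemma scalarHS_crystallographic g m1 m2 x1 x2 :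
  crystallographic g -> (Nat.odd g = true -> m1 = m2) ->
  x1 * x1 + x2 * x2 = 1 ->
  (forall k, (1 <= k <= g)%nat -> inner (x1, x2) (alpha g k) <> 0) ->
  2 * scalarHS g m1 m2 (x1, x2) * snd (zpow (x1, x2) g) =
  - INR g * ((INR m1 + INR m2) * fst (zpow (x1, x2) g) + (INR m2 - INR m1)).
Proof.
  intros Hg Hodd Hx Hp.
  (* Homogenizing the constant term makes the identity polynomial, so that [nsatz] applies. *)
  replace (INR m2 - INR m1) with ((INR m2 - INR m1) * (x1 * x1 + x2 * x2) ^ g)
    by (rewrite Hx, pow1; ring).
  rewrite (im_zpow_product g) by exact Hg.
  rewrite scalarHS_sum, sumk_lsum, Rmult_comm, <- Rmult_assoc, (Rmult_comm _ 2), lsum_scal.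
  pose proof sqrt2_inv_sq. pose proof sqrt3_sq. assert (2 * /2 = 1) by field.
  destruct Hg as [->|[->|[->|[->| ->]]]];
    try (rewrite (Hodd eq_refl));
    cbn [seq lsum lprod fold_right Nat.sub mult Nat.odd Nat.even negb];
    (* Abstracting the wall factors lets [field_simplify] cancel each denominator
       against the product formula. *)
    repeat match goal with
    | |- context [inner (x1, x2) (alpha ?g ?k)] =>
        let p := fresh "p" in
        assert (inner (x1, x2) (alpha g k) <> 0) by (apply Hp; lia);
        set (p := inner (x1, x2) (alpha g k)) in *
    end;
    field_simplify; try solve [repeat split; assumption];
    repeat match goal with p := inner _ _ |- _ => subst p end;
    rewrite_alpha_values; unfold inner; cbn [zpow cmul fst snd pow INR];
    set (s := sqrt 3) in *; set (r := / sqrt 2) in *; set (h := /2) in *;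
    set (M1 := INR m1) in *; set (M2 := INR m2) in *;
    clearbody s r h M1 M2; nsatz.
Qed.

Definition wall (g k : nat) : R := INR k * PI / INR g.

Lemma inner_polar_alpha g k th : inner (cos th, sin th) (alpha g k) = sin (wall g k - th).
Proof.
  unfold inner, alpha, theta, wall; cbn [fst snd].
  replace (INR k * PI / INR g - PI / 2) with (- (PI / 2 - INR k * PI / INR g)) by ring.
  rewrite cos_neg, sin_neg, cos_shift, sin_shift, sin_minus. ring.
Qed.

Lemma inner_mul_i_polar_alpha g k th : inner (mul_i (cos th, sin th)) (alpha g k) = - cos (wall g k - th).
Proof.
  unfold inner, mul_i, alpha, theta, wall; cbn [fst snd].
  replace (INR k * PI / INR g - PI / 2) with (- (PI / 2 - INR k * PI / INR g)) by ring.
  rewrite cos_neg, sin_neg, cos_shift, sin_shift, cos_minus. ring.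
Qed.

Lemma wall_sub_bounds g k th : (1 <= k <= g)%nat -> 0 < th < PI / INR g ->
  0 < wall g k - th < PI.
Proof.
  intros Hk Hth. unfold wall.
  assert (Hg : 0 < INR g) by (apply lt_0_INR; lia).
  assert (H1 : 1 <= INR k) by (apply (le_INR 1); lia).
  assert (H2 : INR k <= INR g) by (apply le_INR; lia).
  pose proof PI_RGT_0.
  assert (PI / INR g <= INR k * PI / INR g).
  { unfold Rdiv. rewrite Rmult_assoc. rewrite <- (Rmult_1_l (PI * / INR g)) at 1.
    apply Rmult_le_compat_r; [apply Rmult_le_pos; [lra | left; apply Rinv_0_lt_compat; lra] | lra]. }
  assert (INR k * PI / INR g <= PI).
  { apply (Rmult_le_reg_r (INR g)); [exact Hg |]. field_simplify; [| lra]. nra. }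
  lra.
Qed.

Lemma sin_mul_chamber_pos g th : (1 <= g)%nat -> 0 < th < PI / INR g -> 0 < sin (INR g * th).
Proof.
  intros Hg Hth. assert (0 < INR g) by (apply lt_0_INR; lia).
  apply sin_gt_0; [nra |].
  replace PI with (INR g * (PI / INR g)) by (field; lra). nra.
Qed.

Lemma scalarHS_polar g m1 m2 th : crystallographic g -> (Nat.odd g = true -> m1 = m2) ->
  0 < th < PI / INR g ->
  2 * scalarHS g m1 m2 (cos th, sin th) * sin (INR g * th) =
  - INR g * ((INR m1 + INR m2) * cos (INR g * th) + (INR m2 - INR m1)).
Proof.
  intros Hg Hodd Hth.
  pose proof (crystallographic_ge_1 g Hg).
  pose proof (scalarHS_crystallographic g m1 m2 (cos th) (sin th) Hg Hodd) as E.
  rewrite zpow_polar in E; cbn [fst snd] in E. apply E.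
  - pose proof (sin2_cos2 th). unfold Rsqr in *. lra.
  - intros k Hk. rewrite inner_polar_alpha. apply Rgt_not_eq, sin_gt_0; apply wall_sub_bounds; auto.
Qed.

Lemma inner_unit x : vnorm x = 1 -> inner x x = 1.
Proof.
  unfold vnorm; intros H. assert (0 <= inner x x) by (unfold inner; nra).
  rewrite <- (sqrt_sqrt (inner x x)), H by assumption. ring.
Qed.

Lemma HS_unit g m1 m2 x : vnorm x = 1 ->
  HS g m1 m2 x = (scalarHS g m1 m2 x * - snd x, scalarHS g m1 m2 x * fst x).
Proof.
  intros Hn. pose proof (inner_unit x Hn) as Hi.
  unfold HS, scalarHS. destruct (HE g m1 m2 x) as [h1 h2]. destruct x as [x1 x2].
  unfold inner, mul_i in *; cbn [fst snd] in *. rewrite Hi, Rdiv_1_r. f_equal; nsatz.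
Qed.

Lemma HS2_unit g m1 m2 x : vnorm x = 1 -> HS2 g m1 m2 x = scalarHS g m1 m2 x ^ 2.
Proof.
  intros Hn. pose proof (inner_unit x Hn) as Hi. unfold HS2. rewrite HS_unit by exact Hn.
  destruct x as [x1 x2]. unfold inner in *; cbn [fst snd pow] in *. nsatz.
Qed.

Lemma normAS2_polar g m1 m2 th : normAS2 g m1 m2 (cos th, sin th) =
  sumk g (fun k => mult m1 m2 k * (cos (wall g k - th) / sin (wall g k - th)) ^ 2).
Proof.
  unfold normAS2. rewrite !sumk_lsum. apply lsum_ext; intros k _.
  unfold kappaE, nuS. rewrite vnorm_polar, !Rdiv_1_r.
  change (- snd (cos th, sin th), fst (cos th, sin th)) with (mul_i (cos th, sin th)).
  rewrite inner_mul_i_polar_alpha, inner_polar_alpha. unfold Rdiv. f_equal. f_equal. ring.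
Qed.

Lemma Rabs_sin_add_INR_PI z k : Rabs (sin (z + INR k * PI)) = Rabs (sin z).
Proof.
  induction k as [|k IH].
  - rewrite Rmult_0_l, Rplus_0_r. reflexivity.
  - rewrite S_INR, Rmult_plus_distr_r, Rmult_1_l, <- Rplus_assoc, neg_sin, Rabs_Ropp. exact IH.
Qed.

Lemma Rabs_sin_INR_mul_le k z : Rabs (sin (INR k * z)) <= INR k * Rabs (sin z).
Proof.
  induction k as [|k IH].
  - rewrite !Rmult_0_l, sin_0, Rabs_R0. lra.
  - rewrite S_INR, Rmult_plus_distr_r, Rmult_1_l, sin_plus.
    eapply Rle_trans; [apply Rabs_triang |]. rewrite !Rabs_mult.
    assert (Rabs (cos z) <= 1) by (apply Rabs_le; apply COS_bound).
    assert (Rabs (cos (INR k * z)) <= 1) by (apply Rabs_le; apply COS_bound).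
    pose proof (Rabs_pos (sin (INR k * z))). pose proof (Rabs_pos (sin z)). nra.
Qed.

Lemma cot_wall_sq_mul_sin_sq_le g k th : (1 <= k <= g)%nat -> 0 < th < PI / INR g ->
  (cos (wall g k - th) / sin (wall g k - th)) ^ 2 * sin (INR g * th) ^ 2 <= INR g ^ 2.
Proof.
  intros Hk Hth.
  pose proof (wall_sub_bounds g k th Hk Hth) as Hw.
  assert (Hg : 0 < INR g) by (apply lt_0_INR; lia).
  set (z := wall g k - th) in *.
  assert (HS : 0 < sin z) by (apply sin_gt_0; lra).
  assert (HQ : Rabs (sin (INR g * th)) <= INR g * sin z).
  { replace (INR g * th) with (- (INR g * z) + INR k * PI) by (unfold z, wall; field; lra).
    rewrite Rabs_sin_add_INR_PI, sin_neg, Rabs_Ropp, <- (Rabs_right (sin z)) by lra.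
    apply Rabs_sin_INR_mul_le. }
  assert (HQ2 : sin (INR g * th) ^ 2 / sin z ^ 2 <= INR g ^ 2).
  { apply (Rmult_le_reg_r (sin z ^ 2)); [apply pow_lt; lra |].
    unfold Rdiv; rewrite Rmult_assoc, Rinv_l, Rmult_1_r by (apply pow_nonzero; lra).
    rewrite <- Rpow_mult_distr, <- pow2_abs. apply pow_incr. split; [apply Rabs_pos | exact HQ]. }
  replace ((cos z / sin z) ^ 2 * sin (INR g * th) ^ 2)
    with (cos z ^ 2 * (sin (INR g * th) ^ 2 / sin z ^ 2)) by (field; lra).
  rewrite <- (Rmult_1_l (INR g ^ 2)).
  apply Rmult_le_compat; [apply pow2_ge_0 | | | exact HQ2].
  - apply Rmult_le_pos; [apply pow2_ge_0 | left; apply Rinv_0_lt_compat, pow_lt; lra].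
  - pose proof (COS_bound z). nra.
Qed.

Lemma normAS2_mul_sin_sq_le g m1 m2 th : (1 <= g)%nat -> 0 < th < PI / INR g ->
  normAS2 g m1 m2 (cos th, sin th) * sin (INR g * th) ^ 2 <= INR g * ((INR m1 + INR m2) * INR g ^ 2).
Proof.
  intros Hg Hth. rewrite normAS2_polar, Rmult_comm, sumk_lsum, lsum_scal, <- sumk_lsum.
  apply sumk_le_const. intros k Hk.
  pose proof (cot_wall_sq_mul_sin_sq_le g k th Hk Hth).
  assert (0 <= mult m1 m2 k <= INR m1 + INR m2).
  { pose proof (pos_INR m1); pose proof (pos_INR m2). unfold mult; destruct (Nat.odd k); lra. }
  pose proof (pow2_ge_0 (cos (wall g k - th) / sin (wall g k - th))).
  pose proof (pow2_ge_0 (sin (INR g * th))). nra.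
Qed.

Lemma cos_sq_add_cos_sq a b : cos a ^ 2 + cos b ^ 2 = 1 + cos (a + b) * cos (a - b).
Proof.
  rewrite cos_plus, cos_minus. pose proof (sin2_cos2 a). pose proof (sin2_cos2 b).
  unfold Rsqr in *. cbn [pow]. nsatz.
Qed.

Lemma cos_sq_le_mul_cot_sq m z : 1 <= m -> 0 < sin z -> cos z ^ 2 <= m * (cos z / sin z) ^ 2.
Proof.
  intros Hm Hs. pose proof (SIN_bound z).
  replace (m * (cos z / sin z) ^ 2) with (cos z ^ 2 * (m / sin z ^ 2)) by (field; lra).
  rewrite <- (Rmult_1_r (cos z ^ 2)) at 1.
  apply Rmult_le_compat_l; [apply pow2_ge_0 |].
  apply (Rmult_le_reg_r (sin z ^ 2)); [apply pow_lt; lra |].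
  unfold Rdiv; rewrite Rmult_assoc, Rinv_l by (apply pow_nonzero; lra). nra.
Qed.

Lemma normAS2_ge g m1 m2 th : (2 <= g)%nat -> (1 <= m1)%nat -> (1 <= m2)%nat ->
  0 < th < PI / INR g ->
  1 - cos (PI / INR g) <= normAS2 g m1 m2 (cos th, sin th).
Proof.
  intros Hg Hm1 Hm2 Hth.
  assert (HG : 2 <= INR g) by (apply (le_INR 2); lia).
  pose proof PI_RGT_0.
  assert (Hmult : forall k, 1 <= mult m1 m2 k).
  { intros k. unfold mult. destruct (Nat.odd k); apply (le_INR 1); assumption. }
  assert (Hterm : forall k, (1 <= k <= g)%nat ->
    cos (wall g k - th) ^ 2 <= mult m1 m2 k * (cos (wall g k - th) / sin (wall g k - th)) ^ 2).
  { intros k Hk. apply cos_sq_le_mul_cot_sq; [apply Hmult |].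
    apply sin_gt_0; apply wall_sub_bounds; assumption. }
  rewrite normAS2_polar.
  eapply Rle_trans; [| apply sumk_ge_last_two; [exact Hg |]].
  2: { intros k Hk. apply Rmult_le_pos; [pose proof (Hmult k); lra | apply pow2_ge_0]. }
  eapply Rle_trans; [| apply Rplus_le_compat; apply Hterm; lia].
  replace (wall g (g - 1) - th) with (PI - (th + PI / INR g))
    by (unfold wall; rewrite minus_INR by lia; simpl INR; field; lra).
  replace (wall g g - th) with (PI - th) by (unfold wall; field; lra).
  rewrite !cos_minus, cos_PI, sin_PI, !Rmult_0_l, !Rplus_0_r.
  replace ((-1 * cos (th + PI / INR g)) ^ 2 + (-1 * cos th) ^ 2)
    with (cos (th + PI / INR g) ^ 2 + cos th ^ 2) by ring.
  rewrite cos_sq_add_cos_sq. replace (th + PI / INR g - th) with (PI / INR g) by ring.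
  assert (0 <= cos (PI / INR g)).
  { apply cos_ge_0.
    - assert (0 < PI / INR g) by (apply Rdiv_lt_0_compat; lra). lra.
    - apply (Rmult_le_reg_r (INR g)); [lra |].
      unfold Rdiv. rewrite Rmult_assoc, Rinv_l by lra. nra. }
  pose proof (COS_bound (th + PI / INR g + th)). nra.
Qed.

Lemma derivable_pt_lim_eq_value f x l l' : derivable_pt_lim f x l -> l = l' -> derivable_pt_lim f x l'.
Proof. intros D <-. exact D. Qed.

(* On the unit circle the flow is a rotation [y' = h i y], hence [(y^k)' = k h i y^k]. *)
Lemma zpow_derive_rotation (y : R -> vec) t h :
  derivable_pt_lim (fun s => fst (y s)) t (h * - snd (y t)) ->
  derivable_pt_lim (fun s => snd (y s)) t (h * fst (y t)) ->
  forall k,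
    derivable_pt_lim (fun s => fst (zpow (y s) k)) t (INR k * h * - snd (zpow (y t) k)) /\
    derivable_pt_lim (fun s => snd (zpow (y s) k)) t (INR k * h * fst (zpow (y t) k)).
Proof.
  intros D1 D2 k. induction k as [|k [IH1 IH2]].
  - split; eapply derivable_pt_lim_eq_value;
      [apply derivable_pt_lim_const | cbn; ring | apply derivable_pt_lim_const | cbn; ring].
  - split; eapply derivable_pt_lim_eq_value.
    + exact (derivable_pt_lim_minus _ _ _ _ _
               (derivable_pt_lim_mult _ _ _ _ _ IH1 D1) (derivable_pt_lim_mult _ _ _ _ _ IH2 D2)).
    + cbn [zpow cmul fst snd]. rewrite S_INR. ring.
    + exact (derivable_pt_lim_plus _ _ _ _ _
               (derivable_pt_lim_mult _ _ _ _ _ IH1 D2) (derivable_pt_lim_mult _ _ _ _ _ IH2 D1)).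
    + cbn [zpow cmul fst snd]. rewrite S_INR. ring.
Qed.

Lemma linear_ode_solution (u : R -> R) c :
  (forall t, t <= 0 -> derivable_pt_lim u t (c * u t)) ->
  forall t, t <= 0 -> u t = u 0 * exp (c * t).
Proof.
  intros Du t Ht. destruct (Req_dec t 0) as [->|Hne].
  { rewrite Rmult_0_r, exp_0. ring. }
  set (w := fun s => u s * exp (- c * s)).
  assert (Dw : forall s, t <= s <= 0 -> derivable_pt_lim w s 0).
  { intros s Hs. eapply derivable_pt_lim_eq_value.
    - apply (derivable_pt_lim_mult u (fun s => exp (- c * s))); [apply Du; lra |].
      apply (derivable_pt_lim_comp (fun s => - c * s) exp).
      + apply (derivable_pt_lim_scal (fun s => s)), derivable_pt_lim_id.
      + apply derivable_pt_lim_exp.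
    - ring. }
  destruct (MVT_cor2 w (fun _ => 0) t 0) as [z [Hz _]]; [lra | exact Dw |].
  assert (Hw : w t = u 0) by (unfold w in Hz |- *; rewrite Rmult_0_r, exp_0 in Hz; lra).
  unfold w in Hw. rewrite <- Hw, Rmult_assoc, <- exp_plus.
  replace (- c * t + c * t) with 0 by ring. rewrite exp_0. ring.
Qed.

Lemma exp_lt_eventually a eps : 0 < a -> 0 < eps ->
  exists t1, 0 < t1 /\ forall t, t < - t1 -> exp (a * t) < eps.
Proof.
  intros Ha He. exists (Rabs (ln eps) / a + 1).
  assert (0 <= Rabs (ln eps) / a) by (apply Rmult_le_pos; [apply Rabs_pos | left; apply Rinv_0_lt_compat, Ha]).
  split; [lra |]. intros t Ht.
  rewrite <- (exp_ln eps He). apply exp_increasing.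
  assert (a * t < - Rabs (ln eps)).
  { replace (- Rabs (ln eps)) with (a * - (Rabs (ln eps) / a)) by (field; lra).
    apply Rmult_lt_compat_l; lra. }
  pose proof (Rle_abs (- ln eps)) as Habs. rewrite Rabs_Ropp in Habs. lra.
Qed.

Lemma sin_sq_ge_of_Rabs_cos_le x c : Rabs (cos x) <= c -> 1 - c ^ 2 <= sin x ^ 2.
Proof.
  intros H. pose proof (sin2_cos2 x). unfold Rsqr in *.
  assert (cos x ^ 2 <= c ^ 2) by (rewrite <- pow2_abs; apply pow_incr; split; [apply Rabs_pos | exact H]).
  cbn [pow] in *. lra.
Qed.

Lemma normAS2_mul_sin_sq_bounds g m1 m2 th : (2 <= g)%nat -> (1 <= m1)%nat -> (m1 <= m2)%nat ->
  0 < th < PI / INR g ->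
  Rabs ((INR m1 + INR m2) * cos (INR g * th) + (INR m2 - INR m1)) <= INR m1 ->
  (1 - cos (PI / INR g)) * (1 - (INR m2 / (INR m1 + INR m2)) ^ 2)
    <= normAS2 g m1 m2 (cos th, sin th) * sin (INR g * th) ^ 2
  <= INR g * ((INR m1 + INR m2) * INR g ^ 2).
Proof.
  intros Hg Hm1 Hm12 Hth Hu.
  assert (M1 : 1 <= INR m1) by (apply (le_INR 1); lia).
  assert (M12 : INR m1 <= INR m2) by (apply le_INR; lia).
  split; [| apply normAS2_mul_sin_sq_le; [lia | exact Hth]].
  set (q := INR m2 / (INR m1 + INR m2)).
  assert (Hq : q * (INR m1 + INR m2) = INR m2) by (unfold q; field; lra).
  assert (Hc : Rabs (cos (INR g * th)) <= q).
  { pose proof (Rle_abs ((INR m1 + INR m2) * cos (INR g * th) + (INR m2 - INR m1))).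
    pose proof (Rle_abs (- ((INR m1 + INR m2) * cos (INR g * th) + (INR m2 - INR m1)))).
    rewrite Rabs_Ropp in *. apply Rabs_le. split; nra. }
  apply Rmult_le_compat.
  - pose proof (COS_bound (PI / INR g)). lra.
  - assert (0 <= q <= 1) by (split; nra). nra.
  - apply normAS2_ge; [exact Hg | exact Hm1 | lia | exact Hth].
  - apply sin_sq_ge_of_Rabs_cos_le, Hc.
Qed.

Lemma normAS2_sin_sq_lower_pos g m1 m2 : (2 <= g)%nat -> (1 <= m1)%nat -> (m1 <= m2)%nat ->
  0 < (1 - cos (PI / INR g)) * (1 - (INR m2 / (INR m1 + INR m2)) ^ 2).
Proof.
  intros Hg Hm1 Hm12.
  assert (M1 : 1 <= INR m1) by (apply (le_INR 1); exact Hm1).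
  assert (M12 : INR m1 <= INR m2) by (apply le_INR; exact Hm12).
  assert (G : 2 <= INR g) by (apply (le_INR 2); exact Hg).
  assert (0 < PI / INR g < PI).
  { pose proof PI_RGT_0. split; [apply Rdiv_lt_0_compat; lra |].
    apply (Rmult_lt_reg_r (INR g)); [lra |]. unfold Rdiv.
    rewrite Rmult_assoc, Rinv_l by lra. nra. }
  assert (cos (PI / INR g) < 1) by (rewrite <- cos_0; apply cos_decreasing_1; lra).
  assert (Hq : INR m2 / (INR m1 + INR m2) * (INR m1 + INR m2) = INR m2) by (field; lra).
  assert (0 <= INR m2 / (INR m1 + INR m2) < 1) by (split; nra).
  apply Rmult_lt_0_compat; nra.
Qed.

Section SphericalFlow.

Variables (g m1 m2 n : nat) (y : R -> vec).
Hypothesis Hg : crystallographic g.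
Hypothesis Hm1 : (1 <= m1)%nat.
Hypothesis Hm12 : (m1 <= m2)%nat.
Hypothesis Hodd : Nat.odd g = true -> m1 = m2.
Hypothesis Hn : ((m1 + m2) * g = 2 * n)%nat.
Hypothesis Hflow : isSphericalMCF g m1 m2 y.
Hypothesis Hmin : HS g m1 m2 (y 0) <> (0, 0).

Definition u (t : R) : R := (INR m1 + INR m2) * fst (zpow (y t) g) + (INR m2 - INR m1).

Lemma two_n_eq : 2 * INR n = INR g * (INR m1 + INR m2).
Proof.
  apply (f_equal INR) in Hn. rewrite !mult_INR, plus_INR in Hn. cbn [INR] in Hn. lra.
Qed.

Lemma flow_polar t : t <= 0 -> exists th, 0 < th < PI / INR g /\ y t = (cos th, sin th).
Proof. intros Ht. destruct (Hflow t Ht) as (Hc & Hv & _). exact (unit_chamber_polar g _ Hc Hv). Qed.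

Lemma u_polar t th : y t = (cos th, sin th) ->
  u t = (INR m1 + INR m2) * cos (INR g * th) + (INR m2 - INR m1).
Proof. intros E. unfold u. rewrite E, zpow_polar. reflexivity. Qed.

Lemma scalarHS_flow t th : 0 < th < PI / INR g -> y t = (cos th, sin th) ->
  2 * scalarHS g m1 m2 (y t) * sin (INR g * th) = - INR g * u t.
Proof. intros Hth E. rewrite (u_polar t th E), E. apply scalarHS_polar; assumption. Qed.

Lemma u_derive t : t <= 0 -> derivable_pt_lim u t (INR g * INR n * u t).
Proof.
  intros Ht. destruct (Hflow t Ht) as (_ & Hv & D1 & D2).
  rewrite HS_unit in D1, D2 by exact Hv. cbn [fst snd] in D1, D2.
  destruct (zpow_derive_rotation y t _ D1 D2 g) as [Dre _].
  destruct (flow_polar t Ht) as (th & Hth & E).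
  pose proof (scalarHS_flow t th Hth E) as Hh. pose proof two_n_eq.
  eapply derivable_pt_lim_eq_value.
  - apply (derivable_pt_lim_plus _ _ _ _ _ (derivable_pt_lim_scal _ (INR m1 + INR m2) _ _ Dre)
           (derivable_pt_lim_const (INR m2 - INR m1) t)).
  - rewrite E, zpow_polar in *. cbn [snd].
    replace (INR n) with (INR g * (INR m1 + INR m2) / 2) by lra.
    replace (INR g * (INR g * (INR m1 + INR m2) / 2) * u t)
      with ((INR m1 + INR m2) * INR g / 2 * - (- INR g * u t)) by field.
    rewrite <- Hh. field.
Qed.

Lemma u_exp t : t <= 0 -> u t = u 0 * exp (INR g * INR n * t).
Proof. apply linear_ode_solution, u_derive. Qed.

Lemma u0_neq_0 : u 0 <> 0.
Proof.
  intros Hu. apply Hmin.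
  destruct (Hflow 0 (Rle_refl 0)) as (_ & Hv & _).
  destruct (flow_polar 0 (Rle_refl 0)) as (th & Hth & E).
  pose proof (scalarHS_flow 0 th Hth E) as Hh. rewrite Hu, Rmult_0_r in Hh.
  pose proof (sin_mul_chamber_pos g th (crystallographic_ge_1 g Hg) Hth).
  assert (scalarHS g m1 m2 (y 0) = 0) as H0 by nra.
  rewrite HS_unit, H0 by exact Hv. f_equal; ring.
Qed.

Lemma u_neq_0 t : t <= 0 -> u t <> 0.
Proof.
  intros Ht. rewrite (u_exp t Ht).
  apply Rmult_integral_contrapositive; split; [exact u0_neq_0 | apply Rgt_not_eq, exp_pos].
Qed.

Lemma ratio_polar t th : 0 < th < PI / INR g -> y t = (cos th, sin th) -> u t <> 0 ->
  normAS2 g m1 m2 (y t) / HS2 g m1 m2 (y t) =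
  4 * (normAS2 g m1 m2 (cos th, sin th) * sin (INR g * th) ^ 2) / (INR g * u t) ^ 2.
Proof.
  intros Hth E Hu.
  pose proof (scalarHS_flow t th Hth E) as Hh.
  pose proof (sin_mul_chamber_pos g th (crystallographic_ge_1 g Hg) Hth) as Hs.
  assert (0 < INR g) by (apply lt_0_INR, (crystallographic_ge_1 g Hg)).
  rewrite HS2_unit by (rewrite E; apply vnorm_polar).
  replace (scalarHS g m1 m2 (y t)) with (- INR g * u t / (2 * sin (INR g * th)))
    by (rewrite <- Hh; field; lra).
  rewrite E. field. repeat split; lra.
Qed.

Lemma ratio_exp_form t th : t <= 0 -> 0 < th < PI / INR g -> y t = (cos th, sin th) ->
  normAS2 g m1 m2 (y t) / HS2 g m1 m2 (y t) =
  4 * (normAS2 g m1 m2 (cos th, sin th) * sin (INR g * th) ^ 2) / (INR g * u 0) ^ 2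
    * exp (- 2 * INR g * INR n * t).
Proof.
  intros Ht Hth E.
  assert (0 < INR g) by (apply lt_0_INR, (crystallographic_ge_1 g Hg)).
  pose proof u0_neq_0.
  rewrite (ratio_polar t th Hth E (u_neq_0 t Ht)), (u_exp t Ht).
  replace (- 2 * INR g * INR n * t) with (- (INR g * INR n * t) + - (INR g * INR n * t)) by ring.
  rewrite exp_plus, exp_Ropp. field. split; [apply Rgt_not_eq, exp_pos | lra].
Qed.

Lemma ratio_rank_one : (g = 1)%nat ->
  forall t, t <= 0 -> normAS2 g m1 m2 (y t) / HS2 g m1 m2 (y t) = 1 / INR n.
Proof.
  intros Hg1 t Ht.
  destruct (flow_polar t Ht) as (th & Hth & E).
  pose proof (u_neq_0 t Ht) as Hu.
  rewrite (ratio_polar t th Hth E Hu), (u_polar t th E) in *.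
  pose proof two_n_eq as Hn'.
  subst g. rewrite <- (Hodd eq_refl) in *.
  pose proof (sin_mul_chamber_pos 1 th (le_n 1) Hth).
  rewrite normAS2_polar. unfold sumk, wall, mult; cbn [seq fold_right Nat.odd Nat.even negb INR] in *.
  replace (1 * PI / 1 - th) with (PI - th) by field.
  rewrite cos_minus, sin_minus, cos_PI, sin_PI, !Rmult_1_l in *.
  assert (cos th <> 0) by (intro Hc; apply Hu; rewrite Hc; ring).
  assert (1 <= INR m1) by (apply (le_INR 1); exact Hm1).
  replace (INR n) with (INR m1) by lra.
  field. repeat split; lra.
Qed.

Lemma ratio_exp_bounds : (2 <= g)%nat ->
  exists t1 c1 c2, 0 < t1 /\ 0 < c1 /\ 0 < c2 /\
    forall t, t < - t1 ->
      c2 * exp (- 2 * INR g * INR n * t) <= normAS2 g m1 m2 (y t) / HS2 g m1 m2 (y t) /\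
      normAS2 g m1 m2 (y t) / HS2 g m1 m2 (y t) <= c1 * exp (- 2 * INR g * INR n * t).
Proof.
  intros Hg2.
  assert (M1 : 1 <= INR m1) by (apply (le_INR 1); exact Hm1).
  assert (M12 : INR m1 <= INR m2) by (apply le_INR; exact Hm12).
  assert (G : 2 <= INR g) by (apply (le_INR 2); exact Hg2).
  pose proof two_n_eq.
  assert (Ha : 0 < INR g * INR n) by nra.
  pose proof u0_neq_0 as Hu0. pose proof (Rabs_pos_lt _ Hu0).
  assert (HgU : 0 < (INR g * u 0) ^ 2)
    by (rewrite <- Rsqr_pow2; apply Rsqr_pos_lt, Rmult_integral_contrapositive; split; lra).
  set (lo := (1 - cos (PI / INR g)) * (1 - (INR m2 / (INR m1 + INR m2)) ^ 2)).
  set (hi := INR g * ((INR m1 + INR m2) * INR g ^ 2)).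
  assert (Hlo : 0 < lo) by (apply normAS2_sin_sq_lower_pos; assumption).
  destruct (exp_lt_eventually _ (INR m1 / Rabs (u 0)) Ha) as (t1 & Ht1 & Hsmall);
    [apply Rdiv_lt_0_compat; lra |].
  exists t1, (4 * hi / (INR g * u 0) ^ 2), (4 * lo / (INR g * u 0) ^ 2).
  split; [exact Ht1 |]. split; [| split].
  { apply Rdiv_lt_0_compat; [| exact HgU]. unfold hi. pose proof (pow_lt _ 2 (Rlt_le_trans _ _ _ Rlt_0_2 G)). nra. }
  { apply Rdiv_lt_0_compat; [lra | exact HgU]. }
  intros t Ht. assert (Ht0 : t <= 0) by lra.
  destruct (flow_polar t Ht0) as (th & Hth & E).
  set (B := normAS2 g m1 m2 (cos th, sin th) * sin (INR g * th) ^ 2).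
  assert (HB : lo <= B <= hi).
  { apply normAS2_mul_sin_sq_bounds; [exact Hg2 | exact Hm1 | exact Hm12 | exact Hth |].
    rewrite <- (u_polar t th E), (u_exp t Ht0), Rabs_mult, (Rabs_right (exp _)) by (left; apply exp_pos).
    specialize (Hsmall t Ht).
    apply (Rmult_lt_compat_l (Rabs (u 0))) in Hsmall; [| lra].
    replace (Rabs (u 0) * (INR m1 / Rabs (u 0))) with (INR m1) in Hsmall by (field; lra). lra. }
  pose proof (ratio_exp_form t th Ht0 Hth E) as Eratio. fold B in Eratio.
  rewrite Eratio. pose proof (exp_pos (- 2 * INR g * INR n * t)).
  unfold Rdiv. split; apply Rmult_le_compat_r; try lra;
    apply Rmult_le_compat_r; try (left; apply Rinv_0_lt_compat; exact HgU); lra.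
Qed.

End SphericalFlow.

Theorem corollary4p15 (g m1 m2 n : nat) (y : R -> vec) :
  (g = 1 \/ g = 2 \/ g = 3 \/ g = 4 \/ g = 6)%nat ->
  (1 <= m1)%nat -> (m1 <= m2)%nat ->
  (Nat.odd g = true -> m1 = m2) ->
  ((m1 + m2) * g = 2 * n)%nat ->
  isSphericalMCF g m1 m2 y ->
  HS g m1 m2 (y 0) <> (0, 0) ->
  ((g = 1)%nat ->
     forall t, t <= 0 -> normAS2 g m1 m2 (y t) / HS2 g m1 m2 (y t) = 1 / INR n) /\
  ((2 <= g)%nat ->
     exists t1 c1 c2, 0 < t1 /\ 0 < c1 /\ 0 < c2 /\
       forall t, t < - t1 ->
         c2 * exp (- 2 * INR g * INR n * t) <= normAS2 g m1 m2 (y t) / HS2 g m1 m2 (y t) /\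
         normAS2 g m1 m2 (y t) / HS2 g m1 m2 (y t) <= c1 * exp (- 2 * INR g * INR n * t)).
Proof.
  intros Hg Hm1 Hm12 Hodd Hn Hflow Hmin. split; intros Hgk.
  - eapply ratio_rank_one; eassumption.
  - eapply ratio_exp_bounds; eassumption.
Qed.
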